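(* Let $\mathcal P$ be a non-degenerate polar space of finite rank $n\ge2$ with no thin lines and defect $d=\mathrm{def}(\mathcal P)$, and suppose $\mathfrak N(\mathcal P)$ admits at least one maximal well ordered chain. Then $\mathrm{gr}(\mathcal P)\le 2n+d$ (which equals $d$ when $d$ is infinite).
   Context: A subspace of $\mathcal P$ is a set of points containing every line meeting it in $\ge2$ points; $\mathrm{gr}(\mathcal P)$ is the minimum size of a set of points whose span (smallest subspace containing it) is all of $\mathcal P$. A nice subspace is a subspace containing two mutually disjoint maximal singular subspaces; $\mathfrak N(\mathcal P)$ is the poset of nice subspaces under inclusion. $\mathrm{def}(\mathcal P)$ is the least upper bound of the lengths (cardinality minus one) of the well ordered chains of $\mathfrak N(\mathcal P)$. A maximal well ordered chain is one that is maximal among well ordered chains. *)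

(* Point-line geometries / polar spaces, nice subspaces,
   well ordered chains, defect and generating rank (cardinal bounds are
   expressed by injections into types). *)
From Stdlib Require Import Arith.

Set Implicit Arguments.

Section PolarDefs.
Variables (P L : Type) (inc : P -> L -> Prop).

Definition subset (X Y : P -> Prop) : Prop := forall p, X p -> Y p.

Definition collinear (p q : P) : Prop :=
  p = q \/ exists l, inc p l /\ inc q l.

(* Buekenhout–Shult polar space: partial linear space (every line has at
   least two points, two distinct points lie on at most one line) satisfying
   the one-or-all axiom. *)
Definition is_polar_space : Prop :=
  (forall l, exists p q, p <> q /\ inc p l /\ inc q l) /\
  (forall p q l1 l2, p <> q -> inc p l1 -> inc q l1 -> inc p l2 -> inc q l2 -> l1 = l2) /\
  (forall p l, (forall x, inc x l -> collinear p x) \/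
               (exists! x, inc x l /\ collinear p x)).

Definition nondegenerate : Prop := forall p, exists q, ~ collinear p q.

Definition no_thin_lines : Prop :=
  forall l, exists a b c, a <> b /\ a <> c /\ b <> c /\ inc a l /\ inc b l /\ inc c l.

Definition subspace (X : P -> Prop) : Prop :=
  forall l, (exists p q, p <> q /\ inc p l /\ inc q l /\ X p /\ X q) ->
            forall x, inc x l -> X x.

Definition singular (X : P -> Prop) : Prop :=
  subspace X /\ forall p q, X p -> X q -> collinear p q.

Definition max_singular (X : P -> Prop) : Prop :=
  singular X /\ forall Y, singular Y -> subset X Y -> subset Y X.

Definition rank_ge (m : nat) : Prop :=
  exists X : nat -> P -> Prop,
    (forall i, i < m -> singular (X i) /\ exists p, X i p) /\
    (forall i, S i < m -> subset (X i) (X (S i)) /\ ~ subset (X (S i)) (X i)).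

Definition has_rank (n : nat) : Prop := rank_ge n /\ ~ rank_ge (S n).

Definition span (S : P -> Prop) : P -> Prop :=
  fun p => forall X, subspace X -> subset S X -> X p.

Definition generates (S : P -> Prop) : Prop := forall p, span S p.

Definition nice (X : P -> Prop) : Prop :=
  subspace X /\ exists M1 M2, max_singular M1 /\ max_singular M2 /\
    (forall p, M1 p -> M2 p -> False) /\ subset M1 X /\ subset M2 X.

Definition wo_chain (C : (P -> Prop) -> Prop) : Prop :=
  (forall X, C X -> nice X) /\
  (forall X Y, C X -> C Y -> subset X Y \/ subset Y X) /\
  (forall X Y, C X -> C Y -> subset X Y -> subset Y X -> X = Y) /\
  (forall D : (P -> Prop) -> Prop, (forall X, D X -> C X) -> (exists X, D X) ->
     exists X0, D X0 /\ forall X, D X -> subset X0 X).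

Definition maximal_wo_chain (C : (P -> Prop) -> Prop) : Prop :=
  wo_chain C /\
  forall C', wo_chain C' -> (forall X, C X -> C' X) -> forall X, C' X -> C X.

(* length(C) = |C| - 1 <= |K| *)
Definition length_le (C : (P -> Prop) -> Prop) (K : Type) : Prop :=
  forall X0, C X0 ->
    exists f : {X : P -> Prop | C X /\ X <> X0} -> K,
      forall a b, f a = f b -> proj1_sig a = proj1_sig b.

(* def(P) <= |K|  (K is an upper bound of the chain lengths) *)
Definition defect_le (K : Type) : Prop :=
  forall C, wo_chain C -> length_le C K.

Definition card_le_plus (S : P -> Prop) (m : nat) (K : Type) : Prop :=
  exists f : {p : P | S p} -> ({i : nat | i < m} + K)%type,
    forall a b, f a = f b -> proj1_sig a = proj1_sig b.

End PolarDefs.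

From Stdlib Require Import Arith Lia Classical ClassicalEpsilon
  FunctionalExtensionality PropExtensionality.

(* 1. Polar-space geometry: the perp of any set is a subspace, pairwise
      collinear sets have a singular hull, maximal singular subspaces contain
      their perp.
   2. Finite rank: every nonempty singular subspace lies in a maximal one, and
      every singular subspace is spanned by at most n of its points.
   3. Non-degeneracy: by repeatedly swapping a maximal singular subspace away
      from a point of its meet with M, one obtains a maximal singular subspace
      opposite (disjoint) to M.  Hence the whole space is nice.
   4. Chains: a nice subspace comparable with every member of C belongs to C.
      So the whole space is the top of C, the least member X0 of C is spanned
      by 2n points (the spans of its two disjoint maximal singular subspaces),
      and every other member X of C is spanned by the members below it plus a
      single new point of X.  These new points are indexed by C \ {X0}, whose
      cardinality is bounded by the defect. *)

Section Spans.
Variables (P L : Type) (inc : P -> L -> Prop).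

Lemma span_subspace A : subspace inc (span inc A).
Proof.
  intros l [p [q [Hpq [Hp [Hq [HA HB]]]]]] x Hx X HX HAX.
  apply (HX l); [|exact Hx]. exists p, q. repeat split; auto; [apply HA|apply HB]; auto.
Qed.

Lemma span_incl A : subset A (span inc A).
Proof. intros a Ha X _ HAX; auto. Qed.

Lemma span_min A X : subspace inc X -> subset A X -> subset (span inc A) X.
Proof. intros HX HAX z Hz; apply Hz; auto. Qed.

Lemma span_mono A B : subset A B -> subset (span inc A) (span inc B).
Proof.
  intros HAB. apply span_min; [apply span_subspace|].
  intros z Hz. apply span_incl, HAB, Hz.
Qed.

Lemma subspace_meet X Y :
  subspace inc X -> subspace inc Y -> subspace inc (fun z => X z /\ Y z).
Proof.
  intros HX HY l [p [q [Hpq [Hp [Hq [[HXp HYp] [HXq HYq]]]]]]] x Hx. split.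
  - apply (HX l); [exists p, q|]; auto.
  - apply (HY l); [exists p, q|]; auto.
Qed.

(* Niceness only asks for two disjoint maximal singular subspaces inside. *)
Lemma nice_upward X Y : nice inc X -> subspace inc Y -> subset X Y -> nice inc Y.
Proof.
  intros [_ [M1 [M2 [HM1 [HM2 [Hdisj [H1 H2]]]]]]] HY HXY. split; [exact HY|].
  exists M1, M2. split; [exact HM1|split; [exact HM2|split; [exact Hdisj|]]].
  split; intros z Hz; apply HXY; auto.
Qed.

Definition prefix (a : nat -> P) (k : nat) : P -> Prop :=
  fun z => exists i, i < k /\ z = a i.

Lemma prefix_ext a b k : (forall i, i < k -> a i = b i) -> subset (prefix a k) (prefix b k).
Proof. intros Hab z [i [Hi ->]]. exists i. split; [exact Hi|now apply Hab]. Qed.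

Lemma card_le_plus_union (a b : nat -> P) (m k1 k2 : nat) (E : P -> Prop) (K : Type)
  (h : {z | E z} -> K) :
  k1 <= m -> k2 <= m -> (forall x y, h x = h y -> proj1_sig x = proj1_sig y) ->
  card_le_plus (fun z => (prefix a k1 z \/ prefix b k2 z) \/ E z) (2 * m) K.
Proof.
  intros Hk1 Hk2 Hh.
  set (code := fun z (r : ({i : nat | i < 2 * m} + K)%type) =>
    (exists i (Hi : i < 2 * m), r = inl (exist _ i Hi) /\
       ((i < m /\ z = a i) \/ (m <= i /\ z = b (i - m)))) \/
    (exists e : {w | E w}, r = inr (h e) /\ z = proj1_sig e)).
  assert (Hcode : forall x : {z | (prefix a k1 z \/ prefix b k2 z) \/ E z},
             exists r, code (proj1_sig x) r).
  { intros [z Hz]; simpl. destruct Hz as [[[i [Hi ->]]|[i [Hi ->]]]|Hz].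
    - assert (Hi' : i < 2 * m) by lia.
      exists (inl (exist _ i Hi')). left. exists i, Hi'.
      split; [reflexivity|left; split; [lia|reflexivity]].
    - assert (Hi' : m + i < 2 * m) by lia.
      exists (inl (exist _ (m + i) Hi')). left. exists (m + i), Hi'.
      split; [reflexivity|right; split; [lia|]]. f_equal; lia.
    - exists (inr (h (exist _ z Hz))). right. exists (exist _ z Hz). split; reflexivity. }
  exists (fun x => proj1_sig (constructive_indefinite_description _ (Hcode x))).
  intros x y.
  destruct (constructive_indefinite_description _ (Hcode x)) as [r Hr],
           (constructive_indefinite_description _ (Hcode y)) as [r' Hr'].
  simpl. intros <-.
  destruct Hr as [[i [Hi [-> Hx]]]|[e [-> Hx]]],
           Hr' as [[j [Hj [Hr Hy]]]|[e' [Hr Hy]]]; try discriminate.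
  - injection Hr as <-.
    destruct Hx as [[? ->]|[? ->]], Hy as [[? ->]|[? ->]]; auto; lia.
  - injection Hr as Hr. apply Hh in Hr. congruence.
Qed.

End Spans.

Arguments prefix {P}.

Section PolarSpace.
Variables (P L : Type) (inc : P -> L -> Prop).
Hypothesis polar : is_polar_space inc.

Local Notation col := (collinear inc).

Lemma collinear_refl p : col p p.
Proof. now left. Qed.

Lemma collinear_sym p q : col p q -> col q p.
Proof. intros [->|[l [H1 H2]]]; [now left|right; eauto]. Qed.

Lemma collinear_on_line a l p q : p <> q -> inc p l -> inc q l -> col a p -> col a q ->
  forall x, inc x l -> col a x.
Proof.
  intros Hpq Hp Hq Hap Haq x Hx. destruct polar as [_ [_ Hoa]].
  destruct (Hoa a l) as [Hall|[r [_ Huniq]]]; [now apply Hall|].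
  exfalso. apply Hpq. rewrite <- (Huniq p), <- (Huniq q); auto.
Qed.

Lemma line_has_collinear_point q l : exists r, inc r l /\ col q r.
Proof.
  destruct polar as [Hline [_ Hoa]].
  destruct (Hoa q l) as [Hall|[r [[Hrl Hqr] _]]]; [|eauto].
  destruct (Hline l) as [r [_ [_ [Hrl _]]]]. eauto.
Qed.

Definition perp (A : P -> Prop) : P -> Prop := fun z => forall a, A a -> col z a.

Lemma perp_subspace A : subspace inc (perp A).
Proof.
  intros l [p [q [Hpq [Hp [Hq [HAp HAq]]]]]] x Hx a Ha.
  apply collinear_sym. apply (collinear_on_line a l p q); auto; apply collinear_sym; auto.
Qed.

(* A singular subspace containing any pairwise collinear set A. *)
Definition singular_hull (A : P -> Prop) : P -> Prop :=
  fun z => perp A z /\ perp (perp A) z.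

Lemma singular_hull_singular A : singular inc (singular_hull A).
Proof.
  split.
  - apply subspace_meet; apply perp_subspace.
  - intros z z' [_ Hz] [Hz' _]. now apply Hz.
Qed.

Lemma singular_hull_incl A :
  (forall a b, A a -> A b -> col a b) -> subset A (singular_hull A).
Proof.
  intros Hcol a Ha. split.
  - intros b Hb. now apply Hcol.
  - intros w Hw. apply collinear_sym, Hw, Ha.
Qed.

Lemma max_singular_perp M : max_singular inc M -> subset (perp M) M.
Proof.
  intros [HMs HMmax] x Hx.
  set (A := fun y => M y \/ y = x).
  assert (Hcol : forall a b, A a -> A b -> col a b).
  { intros a b [Ha| ->] [Hb| ->].
    - now apply HMs.
    - apply collinear_sym. now apply Hx.
    - now apply Hx.
    - apply collinear_refl. }
  apply (HMmax (singular_hull A) (singular_hull_singular A)).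
  - intros y Hy. apply singular_hull_incl; [exact Hcol|now left].
  - apply singular_hull_incl; [exact Hcol|now right].
Qed.

Definition chain_in (I : P -> Prop) (X : nat -> P -> Prop) (m : nat) : Prop :=
  (forall i, i < m -> singular inc (X i) /\ (exists p, X i p) /\ subset (X i) I) /\
  (forall i, S i < m -> subset (X i) (X (S i)) /\ ~ subset (X (S i)) (X i)).

Lemma chain_in_rank_ge I X m : chain_in I X m -> rank_ge inc m.
Proof.
  intros [Hmem Hstrict]. exists X. split; [|exact Hstrict].
  intros i Hi. destruct (Hmem i Hi) as [Hs [Hne _]]. auto.
Qed.

Lemma chain_in_weaken I J X m : chain_in I X m -> subset I J -> chain_in J X m.
Proof.
  intros [Hmem Hstrict] HIJ. split; [|exact Hstrict].
  intros i Hi. destruct (Hmem i Hi) as [Hs [Hne HXI]].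
  split; [exact Hs|split; [exact Hne|]]. intros z Hz; auto.
Qed.

Lemma chain_in_snoc I X k Y : chain_in I X k ->
  singular inc Y -> (exists p, Y p) -> subset Y I ->
  (k = 0 \/ (subset (X (k - 1)) Y /\ ~ subset Y (X (k - 1)))) ->
  chain_in I (fun i => if i <? k then X i else Y) (S k).
Proof.
  intros [Hmem Hstrict] HY HYne HYI Htop. split.
  - intros i Hi. destruct (Nat.ltb_spec i k); auto.
  - intros i Hi. destruct (Nat.ltb_spec i k), (Nat.ltb_spec (S i) k); try lia.
    + now apply Hstrict.
    + replace i with (k - 1) by lia. destruct Htop as [Hk|Htop]; [lia|exact Htop].
Qed.

Lemma growth_chain (R : (P -> Prop) -> Prop) :
  (forall Y, R Y -> singular inc Y /\ exists p, Y p) ->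
  (forall Y, R Y -> exists Y', R Y' /\ subset Y Y' /\ ~ subset Y' Y) ->
  forall Y, R Y -> forall m, exists X, chain_in (fun _ => True) X (S m) /\ R (X m).
Proof.
  intros HR Hgrow Y HY m. induction m as [|m [X [HX HXm]]].
  - exists (fun _ => Y). split; [|exact HY]. destruct (HR Y HY) as [HYs HYne]. split.
    + intros i _. split; [exact HYs|split; [exact HYne|now intros z _]].
    + intros i Hi; lia.
  - destruct (Hgrow _ HXm) as [Y' [HY' [Hsub Hstrict]]].
    exists (fun i => if i <? S m then X i else Y'). split.
    + destruct (HR Y' HY') as [HY's HY'ne].
      apply chain_in_snoc; auto; [now intros z _|].
      right. now replace (S m - 1) with m by lia.
    + now rewrite Nat.ltb_irrefl.
Qed.

Section FiniteRank.
Variable n : nat.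
Hypothesis rank_bound : ~ rank_ge inc (S n).

Lemma no_endless_growth (R : (P -> Prop) -> Prop) :
  (forall Y, R Y -> singular inc Y /\ exists p, Y p) ->
  (forall Y, R Y -> exists Y', R Y' /\ subset Y Y' /\ ~ subset Y' Y) ->
  forall Y, ~ R Y.
Proof.
  intros HR Hgrow Y HY. destruct (growth_chain R HR Hgrow Y HY n) as [X [HX _]].
  apply rank_bound. exact (chain_in_rank_ge _ _ _ HX).
Qed.

Lemma extend_to_max_singular Y0 : singular inc Y0 -> (exists p, Y0 p) ->
  exists M, max_singular inc M /\ subset Y0 M.
Proof.
  intros HY0 HY0ne. apply NNPP; intro Hnone.
  apply (no_endless_growth (fun Y => singular inc Y /\ (exists p, Y p) /\ subset Y0 Y))
    with Y0.
  - intros Y [HY [HYne _]]; auto.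
  -
    intros Y [HY [[p Hp] HY0Y]]. apply NNPP; intro Hstuck. apply Hnone.
    exists Y. split; [split; [exact HY|]|exact HY0Y].
    intros Y' HY' HYY'. apply NNPP; intro Hstrict. apply Hstuck.
    exists Y'. split; [split; [exact HY'|split; [exists p; auto|]]|split; auto].
    intros z Hz; auto.
  - split; [exact HY0|split; [exact HY0ne|now intros z Hz]].
Qed.

Definition independent (a : nat -> P) (k : nat) : Prop :=
  forall i, i < k -> ~ span inc (prefix a i) (a i).

Lemma independent_chain M a k : singular inc M -> (forall i, i < k -> M (a i)) ->
  independent a k -> chain_in (fun _ => True) (fun i => span inc (prefix a (S i))) k.
Proof.
  intros HM Ha Hind. split.
  - intros i Hi. split; [|split; [|now intros z _]].
    + split; [apply span_subspace|]. intros x y Hx Hy.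
      assert (HsubM : subset (span inc (prefix a (S i))) M).
      { apply span_min; [apply HM|]. intros z [j [Hj ->]]. apply Ha; lia. }
      apply HM; auto.
    + exists (a i). apply span_incl. exists i; auto.
  - intros i Hi. split.
    + apply span_mono. intros z [j [Hj ->]]. exists j; split; [lia|reflexivity].
    + intro Hs. apply (Hind (S i) Hi), Hs, span_incl. exists (S i); auto.
Qed.

Lemma spanned_or_independent (p0 : P) M j :
  (exists a, (forall i, i < j -> M (a i)) /\ independent a j) \/
  (exists k a, k < j /\ (forall i, i < k -> M (a i)) /\ subset M (span inc (prefix a k))).
Proof.
  induction j as [|j [[a [Ha Hind]]|[k [a [Hk Hspan]]]]].
  - left. exists (fun _ => p0). split; intros i Hi; lia.
  - destruct (classic (subset M (span inc (prefix a j)))) as [Hcov|Hcov].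
    + right. exists j, a. auto.
    + left. destruct (not_all_ex_not _ _ Hcov) as [m Hm].
      apply imply_to_and in Hm. destruct Hm as [HmM Hmout].
      set (a' := fun i => if i <? j then a i else m).
      assert (Hagree : forall i, i < j -> a' i = a i).
      { intros i Hi. unfold a'. destruct (Nat.ltb_spec i j); [reflexivity|lia]. }
      assert (Hlast : a' j = m) by (unfold a'; now rewrite Nat.ltb_irrefl).
      exists a'. split.
      * intros i Hi. destruct (Nat.eq_dec i j) as [->|Hij]; [now rewrite Hlast|].
        rewrite Hagree by lia. apply Ha; lia.
      * intros i Hi Hdep.
        apply (span_mono _ _ inc (prefix a' i) (prefix a i)) in Hdep;
          [|apply prefix_ext; intros l Hl; apply Hagree; lia].
        destruct (Nat.eq_dec i j) as [->|Hij].
        -- rewrite Hlast in Hdep. contradiction.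
        -- rewrite Hagree in Hdep by lia. apply (Hind i); [lia|exact Hdep].
  - right. exists k, a. split; [lia|exact Hspan].
Qed.

Lemma singular_finitely_spanned (p0 : P) M : singular inc M ->
  exists k a, k <= n /\ (forall i, i < k -> M (a i)) /\ subset M (span inc (prefix a k)).
Proof.
  intros HM. destruct (spanned_or_independent p0 M (S n)) as [[a [Ha Hind]]|[k [a [Hk H]]]].
  - exfalso. apply rank_bound.
    exact (chain_in_rank_ge _ _ _ (independent_chain M a (S n) HM Ha Hind)).
  - exists k, a. split; [lia|exact H].
Qed.

Lemma nice_finitely_spanned (p0 : P) X : nice inc X ->
  exists a k1 b k2, k1 <= n /\ k2 <= n /\
    subset (fun z => prefix a k1 z \/ prefix b k2 z) X /\
    nice inc (span inc (fun z => prefix a k1 z \/ prefix b k2 z)).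
Proof.
  intros [_ [M1 [M2 [HM1 [HM2 [Hdisj [HM1X HM2X]]]]]]].
  destruct (singular_finitely_spanned p0 M1 (proj1 HM1)) as [k1 [a [Hk1 [Ha HM1a]]]].
  destruct (singular_finitely_spanned p0 M2 (proj1 HM2)) as [k2 [b [Hk2 [Hb HM2b]]]].
  exists a, k1, b, k2. split; [exact Hk1|split; [exact Hk2|split]].
  - intros z [[i [Hi ->]]|[i [Hi ->]]]; [apply HM1X, Ha|apply HM2X, Hb]; exact Hi.
  - split; [apply span_subspace|]. exists M1, M2.
    split; [exact HM1|split; [exact HM2|split; [exact Hdisj|split]]].
    + intros z Hz. apply (span_mono _ _ inc (prefix a k1)); [intros w Hw; now left|now apply HM1a].
    + intros z Hz. apply (span_mono _ _ inc (prefix b k2)); [intros w Hw; now right|now apply HM2b].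
Qed.

Section NonDegenerate.
Hypothesis nondeg : nondegenerate inc.

(* Given p in M /\ M' and q not collinear with p, some maximal singular M''
   through q meets M inside M'; in particular M /\ M'' misses p. *)
Lemma swap_away M M' p q : max_singular inc M -> max_singular inc M' ->
  M p -> M' p -> ~ col p q ->
  exists M'', max_singular inc M'' /\ M'' q /\ forall y, M y -> M'' y -> M' y.
Proof.
  intros HM HM' HpM HpM' Hpq.
  set (B := fun y => y = q \/ (M' y /\ col q y)).
  assert (HBcol : forall a b, B a -> B b -> col a b).
  { intros a b [->|[Ha Hqa]] [->|[Hb Hqb]].
    - apply collinear_refl.
    - exact Hqb.
    - now apply collinear_sym.
    - now apply (proj2 (proj1 HM')). }
  destruct (extend_to_max_singular (singular_hull B) (singular_hull_singular B))
    as [M'' [HM'' HBM'']].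
  { exists q. apply singular_hull_incl; [exact HBcol|now left]. }
  assert (HB : subset B M'') by (intros y Hy; apply HBM'', singular_hull_incl; auto).
  exists M''. split; [exact HM''|split; [apply HB; now left|]].
  (* y in M /\ M'' is collinear with all of M', hence lies in M' *)
  intros y HyM HyM''. apply (max_singular_perp M' HM'). intros m Hm.
  destruct (classic (col q m)) as [Hqm|Hqm].
  - apply (proj2 (proj1 HM'')); auto. apply HB. now right.
  - destruct (classic (m = p)) as [->|Hmp]; [now apply (proj2 (proj1 HM))|].
    destruct (proj2 (proj1 HM') m p Hm HpM') as [Hmp'|[l [Hml Hpl]]]; [contradiction|].
    destruct (line_has_collinear_point q l) as [r [Hrl Hqr]].
    assert (HrM' : M' r) by (apply (proj1 (proj1 HM') l); [exists m, p; auto|exact Hrl]).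
    assert (Hrp : r <> p) by (intros ->; apply Hpq, collinear_sym, Hqr).
    apply (collinear_on_line y l r p); auto.
    + apply (proj2 (proj1 HM'')); auto. apply HB. now right.
    + now apply (proj2 (proj1 HM)).
Qed.

Lemma opposite_by_descent M (HM : max_singular inc M) k : forall M',
  max_singular inc M' -> (forall X, ~ chain_in (fun z => M z /\ M' z) X k) ->
  exists M'', max_singular inc M'' /\ forall p, M p -> M'' p -> False.
Proof.
  induction k as [|k IH]; intros M' HM' Hshort.
  - exfalso. apply (Hshort (fun _ _ => False)). split; intros; lia.
  - destruct (classic (exists p, M p /\ M' p)) as [[p [HpM HpM']]|Hdisj].
    2: { exists M'. split; [exact HM'|]. intros p H1 H2. apply Hdisj; eauto. }
    destruct (nondeg p) as [q Hpq].
    destruct (swap_away M M' p q HM HM' HpM HpM' Hpq) as [M'' [HM'' [HqM'' Hmeet]]].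
    assert (HpM'' : ~ M'' p) by (intro H; apply Hpq, (proj2 (proj1 HM'')); auto).
    apply (IH M'' HM''). intros X HX.
    (* a chain in M /\ M'' extends by M /\ M' to a longer chain in M /\ M' *)
    apply (Hshort (fun i => if i <? k then X i else (fun z => M z /\ M' z))).
    apply chain_in_snoc.
    + apply (chain_in_weaken _ _ _ _ HX). intros z [H1 H2]; auto.
    + split; [apply subspace_meet; [exact (proj1 (proj1 HM))|exact (proj1 (proj1 HM'))]|].
      intros a b [Ha _] [Hb _]. now apply (proj2 (proj1 HM)).
    + exists p; auto.
    + now intros z Hz.
    + destruct k as [|k]; [now left|right].
      assert (Htop : subset (X k) (fun z => M z /\ M'' z)) by (apply (proj1 HX); lia).
      replace (S k - 1) with k by lia. split.
      * intros z Hz. destruct (Htop z Hz); auto.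
      * intro Hs. apply HpM''. apply (Htop p (Hs p (conj HpM HpM'))).
Qed.

Lemma opposite_pair (p0 : P) : exists M1 M2,
  max_singular inc M1 /\ max_singular inc M2 /\ forall p, M1 p -> M2 p -> False.
Proof.
  destruct (extend_to_max_singular (fun z => z = p0)) as [M [HM _]].
  - split.
    + intros l [p [q [Hpq [_ [_ [-> ->]]]]]]. contradiction.
    + intros a b -> ->. apply collinear_refl.
  - eauto.
  - destruct (opposite_by_descent M HM (S n) M HM) as [M' [HM' Hdisj]].
    + intros X HX. apply rank_bound. exact (chain_in_rank_ge _ _ _ HX).
    + exists M, M'. auto.
Qed.

End NonDegenerate.
End FiniteRank.
End PolarSpace.

Section MaximalChains.
Variables (P L : Type) (inc : P -> L -> Prop).
Variable C : (P -> Prop) -> Prop.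

Lemma wo_chain_add Z : wo_chain inc C -> nice inc Z ->
  (forall Y, C Y -> subset Y Z \/ subset Z Y) -> wo_chain inc (fun Y => C Y \/ Y = Z).
Proof.
  intros [Hnice [Hcmp [_ Hwell]]] HZ HZcmp. split; [|split; [|split]].
  - intros X [HX| ->]; auto.
  - intros X Y [HX| ->] [HY| ->]; auto.
    + destruct (HZcmp Y HY); auto.
    + left. now intros z h.
  - intros X Y _ _ H1 H2. apply functional_extensionality; intro z.
    apply propositional_extensionality; split; auto.
  - intros D HD [X1 HX1].
    destruct (classic (exists X, D X /\ C X)) as [[X2 [HDX2 HCX2]]|HnoC].
    + destruct (Hwell (fun X => D X /\ C X)) as [Xm [[HDm HCm] Hleast]];
        [now intros X []|eauto|].
      destruct (classic (D Z /\ ~ subset Xm Z)) as [[HDZ HZm]|HXm].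
      * (* Z lies below the least old member of D *)
        exists Z. split; [exact HDZ|].
        assert (HZXm : subset Z Xm) by (destruct (HZcmp Xm HCm); tauto).
        intros X HX. destruct (HD X HX) as [HCX| ->]; [|now intros z h].
        intros z h. apply (Hleast X); auto.
      * exists Xm. split; [exact HDm|].
        intros X HX. destruct (HD X HX) as [HCX| ->]; [now apply Hleast|].
        apply NNPP; intro H. apply HXm. auto.
    + destruct (HD X1 HX1) as [HC| ->]; [exfalso; eauto|].
      exists Z. split; [exact HX1|]. intros X HX.
      destruct (HD X HX) as [HC| ->]; [exfalso; eauto|now intros z h].
Qed.

Hypothesis maxC : maximal_wo_chain inc C.

Lemma maximal_chain_absorbs Z : nice inc Z ->
  (forall Y, C Y -> subset Y Z \/ subset Z Y) -> C Z.
Proof.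
  intros HZ HZcmp. destruct maxC as [HwC Hmax].
  apply (Hmax (fun Y => C Y \/ Y = Z)); [now apply wo_chain_add|now left|now right].
Qed.

Section LeastMember.
Variable X0 : P -> Prop.
Hypothesis X0_in : C X0.
Hypothesis X0_least : forall X, C X -> subset X0 X.

Lemma least_below_nice Z : nice inc Z -> subset Z X0 -> subset X0 Z.
Proof.
  intros HZ HZX0. apply X0_least, maximal_chain_absorbs; [exact HZ|].
  intros Y HY. right. intros z h. now apply (X0_least Y HY), HZX0.
Qed.

Variable inh : inhabited P.

Definition strictly_below (X : P -> Prop) : P -> Prop :=
  fun z => exists Y, C Y /\ subset Y X /\ ~ subset X Y /\ Y z.

(* A point of X not in any member of C below X, if there is one. *)
Definition fresh (X : P -> Prop) : P :=
  epsilon inh (fun z => X z /\ ~ strictly_below X z).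

Definition fresh_points : P -> Prop :=
  fun z => exists X, C X /\ X <> X0 /\ z = fresh X.

Lemma below_and_point_in_chain X z : C X -> X z -> ~ subset X X0 ->
  C (span inc (fun w => strictly_below X w \/ w = z)).
Proof.
  intros HCX HXz HXX0. destruct maxC as [[Hnice [Hcmp _]] _].
  apply maximal_chain_absorbs.
  - apply (nice_upward _ _ inc X0); [now apply Hnice|apply span_subspace|].
    intros w Hw. apply span_incl. left. exists X0.
    split; [exact X0_in|split; [now apply X0_least|split; [exact HXX0|exact Hw]]].
  - intros Y HY. destruct (classic (subset X Y)) as [HXY|HXY].
    + right. apply span_min; [apply (Hnice Y HY)|].
      intros w [[Y' [_ [HY'X [_ Hw]]]]| ->]; apply HXY; auto.
    + left. destruct (Hcmp Y X HY HCX) as [HYX|HXY']; [|contradiction].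
      intros w Hw. apply span_incl. left. exists Y. auto.
Qed.

Lemma chain_step X : C X -> ~ subset X X0 ->
  subset X (span inc (fun w => strictly_below X w \/ w = fresh X)).
Proof.
  intros HCX HXX0 z Hz. apply NNPP; intro Hout.
  assert (Hzb : ~ strictly_below X z) by (intro Hb; apply Hout, span_incl; now left).
  destruct (epsilon_spec inh (fun w => X w /\ ~ strictly_below X w)
                         (ex_intro _ z (conj Hz Hzb))) as [Hf Hfb].
  fold (fresh X) in Hf, Hfb.
  set (Z := span inc (fun w => strictly_below X w \/ w = fresh X)).
  apply Hfb. exists Z. split; [now apply below_and_point_in_chain|split; [|split]].
  - apply span_min; [exact (proj1 (proj1 (proj1 maxC) X HCX))|].
    intros w [[Y [_ [HYX [_ Hw]]]]| ->]; auto.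
  - intro HXZ. now apply Hout, HXZ.
  - apply span_incl. now right.
Qed.

Lemma chain_generated G : subset X0 (span inc G) ->
  forall X, C X -> subset X (span inc (fun z => G z \/ fresh_points z)).
Proof.
  intros HX0G X HX. apply NNPP; intro Hbad. destruct maxC as [[_ [_ [_ Hwell]]] _].
  set (Sg := span inc (fun z => G z \/ fresh_points z)).
  assert (HGS : subset (span inc G) Sg) by (apply span_mono; intros z Hz; now left).
  destruct (Hwell (fun Y => C Y /\ ~ subset Y Sg)) as [Xs [[HCs Hbs] Hleast]];
    [now intros Y []|eauto|].
  assert (HXsX0 : ~ subset Xs X0) by (intro H; apply Hbs; intros z Hz; apply HGS, HX0G, H, Hz).
  apply Hbs. intros z Hz. apply (chain_step Xs HCs HXsX0) in Hz.
  revert z Hz. apply span_min; [apply span_subspace|].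
  intros w [[Y [HY [HYXs [HXsY Hw]]]]| ->].
  - apply NNPP; intro Hwn. apply HXsY, (Hleast Y). split; [exact HY|].
    intro HYS. apply Hwn, HYS, Hw.
  - apply span_incl. right. exists Xs. split; [exact HCs|split; [|reflexivity]].
    intros ->. now apply HXsX0.
Qed.

(* The fresh points are indexed by C \ {X0}. *)
Lemma fresh_points_injection K : defect_le inc K ->
  exists h : {z | fresh_points z} -> K, forall x y, h x = h y -> proj1_sig x = proj1_sig y.
Proof.
  intros HK. destruct (HK C (proj1 maxC) X0 X0_in) as [g Hg].
  set (origin := fun x : {z | fresh_points z} =>
                   constructive_indefinite_description _ (proj2_sig x)).
  exists (fun x => let (X, HX) := origin x in
                   g (exist _ X (conj (proj1 HX) (proj1 (proj2 HX))))).
  intros x y. cbv beta.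
  destruct (origin x) as [X [HCX [HX0 HxX]]], (origin y) as [Y [HCY [HY0 HyY]]].
  intro E. apply Hg in E. simpl in E. subst. congruence.
Qed.

Lemma maximal_chain_generators G : subset X0 (span inc G) ->
  exists E, (forall X, C X -> subset X (span inc (fun z => G z \/ E z))) /\
    forall K, defect_le inc K ->
      exists h : {z | E z} -> K, forall x y, h x = h y -> proj1_sig x = proj1_sig y.
Proof.
  intros HX0G. exists fresh_points. split.
  - exact (chain_generated G HX0G).
  - exact fresh_points_injection.
Qed.

End LeastMember.
End MaximalChains.

Theorem mainTheorem16 (P L : Type) (inc : P -> L -> Prop) (n : nat) :
  is_polar_space inc ->
  nondegenerate inc ->
  has_rank inc n ->
  2 <= n ->
  no_thin_lines inc ->
  (exists C, maximal_wo_chain inc C) ->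
  exists S : P -> Prop,
    generates inc S /\
    forall K : Type, defect_le inc K -> card_le_plus S (2 * n) K.
Proof.
  intros polar nondeg [[X [HX _]] rank_bound] Hn _ [C HC].
  destruct (HX 0 ltac:(lia)) as [_ [p0 _]].
  destruct (proj1 HC) as [Hnice [_ [_ Hwell]]].
  (* the whole space is nice, hence the top member of C *)
  destruct (opposite_pair P L inc polar n rank_bound nondeg p0) as [M1 [M2 [HM1 [HM2 Hdisj]]]].
  assert (Hwhole : C (fun _ => True)).
  { apply (maximal_chain_absorbs P L inc C HC).
    - split; [now intros l _ x _|]. exists M1, M2.
      split; [exact HM1|split; [exact HM2|split; [exact Hdisj|split; now intros z _]]].
    - intros Y _. left. now intros z _. }
  (* the least member X0 of C is spanned by at most 2n points *)
  destruct (Hwell C (fun X h => h) (ex_intro _ _ Hwhole)) as [X0 [HX0 HX0least]].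
  destruct (nice_finitely_spanned P L inc n rank_bound p0 X0 (Hnice X0 HX0))
    as [a [k1 [b [k2 [Hk1 [Hk2 [HGX0 HGnice]]]]]]].
  set (G := fun z => prefix a k1 z \/ prefix b k2 z).
  assert (HX0G : subset X0 (span inc G)).
  { apply (least_below_nice P L inc C HC X0 HX0least _ HGnice).
    apply span_min; [exact (proj1 (Hnice X0 HX0))|exact HGX0]. }
  (* each other member of C adds one generator, indexed injectively by C \ {X0} *)
  destruct (maximal_chain_generators P L inc C HC X0 HX0 HX0least (inhabits p0) G HX0G)
    as [E [HEgen HEcard]].
  exists (fun z => G z \/ E z). split.
  - intro p. exact (HEgen _ Hwhole p I).
  - intros K HK. destruct (HEcard K HK) as [h Hh].
    exact (card_le_plus_union P a b n k1 k2 E K h Hk1 Hk2 Hh).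
Qed.
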